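(* Let $\Delta$ be a simplicial polytopal fan in $\mathbb{R}^d$ with ray generators $\mathbf{v}_1,\ldots,\mathbf{v}_n$ and let $\mathbf{u}^{(1)},\ldots,\mathbf{u}^{(m)}\in\mathbb{S}^{d-1}$, $U=(\mathbf{u}^{(1)},\ldots,\mathbf{u}^{(m)})^\mathsf{T}$. Then for all $m\ge1$, \[ \lambda_n(A_U^\mathsf{T}A_U)\le mn(c^\Delta)^2. \]
   Context: A fan is simplicial if every cone is generated by linearly independent vectors; polytopal if it is the normal fan of a polytope. For $\mathbf{u}\in\mathbb{R}^d$, with $\sigma$ the cone of $\Delta$ containing $\mathbf{u}$ in its relative interior and $\mathbf{u}=\sum_{k\in I_\sigma}\lambda_k\mathbf{v}_k$ over the generators of $\sigma$, set $[\mathbf{u}]_i=\lambda_i$ for $i\in I_\sigma$ and $0$ otherwise; $A_U$ is the $m\times n$ matrix with rows $[\mathbf{u}^{(i)}]^\mathsf{T}$. $c^\Delta=\max_{\mathbf{u}\in\mathbb{S}^{d-1}}\max_i[\mathbf{u}]_i$. $\lambda_n(A)$ denotes the largest eigenvalue of a symmetric matrix $A$. *)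

From HB Require Import structures.
From mathcomp Require Import all_boot all_order all_algebra.
From mathcomp Require Import boolp classical_sets reals.
Set Implicit Arguments. Unset Strict Implicit. Unset Printing Implicit Defensive.
Import Order.TTheory GRing.Theory Num.Theory.
Local Open Scope ring_scope.
Local Open Scope classical_set_scope.

Section Defs.
Variables (R : realType) (d n : nat).

Definition dotv (x y : 'rV[R]_d) : R := \sum_(j < d) x 0 j * y 0 j.

Definition on_sphere (u : 'rV[R]_d) : Prop := dotv u u = 1.

Definition gcone (v : 'I_n -> 'rV[R]_d) (S : {set 'I_n}) : set 'rV[R]_d :=
  [set x | exists lam : 'I_n -> R, (forall i, 0 <= lam i) /\
     (forall i, i \notin S -> lam i = 0) /\ x = \sum_i lam i *: v i].

Definition lin_indep (v : 'I_n -> 'rV[R]_d) (S : {set 'I_n}) : Prop :=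
  forall lam : 'I_n -> R, (forall i, i \notin S -> lam i = 0) ->
    \sum_i lam i *: v i = 0 -> forall i, lam i = 0.

(* A simplicial fan with ray generators v_1..v_n, given by the index sets of
   the generators of its cones: every cone is generated by linearly
   independent generators, each cone(v_i) is a ray of the fan, and the rays
   are pairwise distinct. *)
Definition simplicial_fan_rays (v : 'I_n -> 'rV[R]_d) (D : {set {set 'I_n}}) : Prop :=
  [/\ (forall S, S \in D -> lin_indep v S),
      (forall i, (finset.set1 i) \in D) &
      (forall i j, gcone v (finset.set1 i) = gcone v (finset.set1 j) -> i = j)].

Definition polytope k (p : 'I_k -> 'rV[R]_d) : set 'rV[R]_d :=
  [set x | exists w : 'I_k -> R, (forall j, 0 <= w j) /\ \sum_j w j = 1 /\
     x = \sum_j w j *: p j].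

Definition face_of (P : set 'rV[R]_d) (c : 'rV[R]_d) : set 'rV[R]_d :=
  [set x | P x /\ forall y, P y -> dotv c y <= dotv c x].

Definition normal_cone (P F : set 'rV[R]_d) : set 'rV[R]_d :=
  [set c | F `<=` face_of P c].

Definition normal_fan (P : set 'rV[R]_d) : set (set 'rV[R]_d) :=
  [set N | exists c0, N = normal_cone P (face_of P c0)].

Definition polytopal (v : 'I_n -> 'rV[R]_d) (D : {set {set 'I_n}}) : Prop :=
  exists k (p : 'I_k.+1 -> 'rV[R]_d),
    gcone v @` [set S | S \in D] = normal_fan (polytope p).

(* lam are the coordinates of u: u lies in the relative interior of the
   (simplicial) cone sigma_S (all coefficients on generators of S positive),
   u = sum_{k in S} lam_k v_k, and lam_i = 0 for i not in S. *)
Definition is_coords (v : 'I_n -> 'rV[R]_d) (D : {set {set 'I_n}})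
    (u : 'rV[R]_d) (lam : 'rV[R]_n) : Prop :=
  exists2 S, S \in D &
    [/\ (forall i, i \in S -> 0 < lam 0 i),
        (forall i, i \notin S -> lam 0 i = 0) &
        u = \sum_i lam 0 i *: v i].

Definition coords (v : 'I_n -> 'rV[R]_d) (D : {set {set 'I_n}}) (u : 'rV[R]_d)
  : 'rV[R]_n := xget 0 (is_coords v D u).

Definition cDelta (v : 'I_n -> 'rV[R]_d) (D : {set {set 'I_n}}) : R :=
  sup [set x | exists u, on_sphere u /\ exists i, x = coords v D u 0 i].

Definition A_U (v : 'I_n -> 'rV[R]_d) (D : {set {set 'I_n}}) m
    (U : 'I_m -> 'rV[R]_d) : 'M[R]_(m, n) :=
  \matrix_(i, j) coords v D (U i) 0 j.

End Defs.

Definition lambda_max (R : realType) N (A : 'M[R]_N) : R :=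
  sup [set a | eigenvalue A a].

(* The coordinates [u]_i are
   nonnegative and, on the unit sphere, bounded: in a simplicial cone sigma_S
   they are the image of u under a fixed linear map (a pseudo-inverse of the
   matrix of generators of S).  So c^Delta is the supremum of a bounded set,
   0 <= (A_U)_ki <= c^Delta, and every entry of B = A_U^T A_U lies in
   [0, m (c^Delta)^2].  For an eigenvector x of B with eigenvalue a,
   a |x|^2 = x B x^T <= m (c^Delta)^2 (sum_j |x_j|)^2 <= m n (c^Delta)^2 |x|^2
   by Cauchy-Schwarz. *)
From mathcomp Require Import all_boot all_order all_algebra.
From mathcomp Require Import boolp classical_sets reals.
From mathcomp Require Import lra.
Set Implicit Arguments.
Unset Strict Implicit.
Unset Printing Implicit Defensive.
Import Order.TTheory GRing.Theory Num.Theory.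
Local Open Scope ring_scope.

Lemma sqr_sum_norm_le (R : realDomainType) n (x : 'I_n -> R) :
  (\sum_j `|x j|) ^+ 2 <= n%:R * \sum_j x j ^+ 2.
Proof.
have amgm j k : 2 * (`|x j| * `|x k|) <= x j ^+ 2 + x k ^+ 2.
  rewrite -(real_normK (num_real (x j))) -(real_normK (num_real (x k))).
  have := sqr_ge0 (`|x j| - `|x k|); nra.
have -> : (\sum_j `|x j|) ^+ 2 = \sum_j \sum_k `|x j| * `|x k|.
  by rewrite expr2 mulr_suml; apply: eq_bigr => j _; rewrite mulr_sumr.
rewrite -(ler_pM2l (_ : 0 < 2)) // [leLHS]mulr_sumr.
apply: (@le_trans _ _ (\sum_j \sum_k (x j ^+ 2 + x k ^+ 2))).
  by apply: ler_sum => j _; rewrite mulr_sumr; apply: ler_sum => k _.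
rewrite (eq_bigr (fun j => x j ^+ 2 *+ n + \sum_k x k ^+ 2)); last first.
  by move=> j _; rewrite big_split /= sumr_const card_ord.
rewrite big_split /= sumr_const card_ord sumrMnl -[_ *+ n]mulr_natl; lra.
Qed.

Lemma sum_sqr_gt0 (R : realDomainType) n (x : 'rV[R]_n) :
  x != 0 -> 0 < \sum_j x 0 j ^+ 2.
Proof.
move=> x0; rewrite lt_def sumr_ge0 ?andbT => [|j _]; last exact: sqr_ge0.
apply: contra x0 => /eqP /psumr_eq0P x2_0; apply/eqP/rowP => j.
by rewrite mxE; apply/eqP; rewrite -sqrf_eq0 x2_0 // => i _; exact: sqr_ge0.
Qed.

Lemma eigenvalue_le_dim_mul_entry_bound (R : realFieldType) n (B : 'M[R]_n) K a :
  (forall k j, `|B k j| <= K) -> eigenvalue B a -> a <= n%:R * K.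
Proof.
move=> BK /eigenvalueP [x xB x0].
have K_ge0 : 0 <= K.
  have [j _] : exists j, x 0 j != 0.
    apply/existsP; apply: contraR x0 => /existsPn x_0.
    by apply/eqP/rowP => j; rewrite mxE; apply/eqP; move: (x_0 j); rewrite negbK.
  exact: le_trans (normr_ge0 _) (BK j j).
have quad : a * \sum_j x 0 j ^+ 2 = \sum_j \sum_k x 0 k * B k j * x 0 j.
  rewrite mulr_sumr; apply: eq_bigr => j _.
  have := congr1 (fun y : 'rV_n => y 0 j) xB; rewrite /= !mxE => xBj.
  by rewrite expr2 mulrA -xBj mulr_suml.
have quad_le : a * \sum_j x 0 j ^+ 2 <= K * (\sum_j `|x 0 j|) ^+ 2.
  rewrite quad expr2 mulr_suml mulr_sumr; apply: ler_sum => j _.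
  rewrite mulr_sumr mulr_sumr; apply: ler_sum => k _.
  apply: le_trans (ler_norm _) _; rewrite !normrM mulrAC mulrC [`|x 0 j| * _]mulrC.
  by rewrite ler_wpM2r ?mulr_ge0.
rewrite -(ler_pM2r (sum_sqr_gt0 x0)); apply: le_trans quad_le _.
by rewrite [leRHS]mulrAC [leRHS]mulrC ler_wpM2l // sqr_sum_norm_le.
Qed.

Lemma gram_entry_norm_le (R : realDomainType) m n (A : 'M[R]_(m, n)) c :
  (forall i j, 0 <= A i j <= c) -> forall k j, `|(A^T *m A) k j| <= m%:R * c ^+ 2.
Proof.
move=> A0c k j; rewrite mxE; apply: le_trans (ler_norm_sum _ _ _) _.
apply: (@le_trans _ _ (\sum_(i < m) c ^+ 2)); last by rewrite sumr_const card_ord mulr_natl.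
apply: ler_sum => i _.
have /andP [Aik0 Aikc] := A0c i k; have /andP [Aij0 Aijc] := A0c i j.
by rewrite mxE ger0_norm ?mulr_ge0 // expr2 ler_pM.
Qed.

Lemma lambda_max_le (R : realType) N (A : 'M[R]_N) b :
  0 <= b -> (forall a, eigenvalue A a -> a <= b) -> lambda_max A <= b.
Proof.
move=> b0 eig_le; rewrite /lambda_max.
have [->|/set0P eig_ne0] := eqVneq [set a | eigenvalue A a]%classic set0.
  by rewrite sup0.
exact: ge_sup.
Qed.

Lemma on_sphere_norm_le1 (R : realType) d (u : 'rV[R]_d) k : on_sphere u -> `|u 0 k| <= 1.
Proof.
rewrite /on_sphere /dotv => u1; rewrite -(@expr_le1 _ 2) // real_normK ?num_real //.
rewrite -u1 (bigD1 k) //= -expr2 lerDl.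
by apply: sumr_ge0 => j _; rewrite -expr2 sqr_ge0.
Qed.

Lemma row_mulmx_norm_le (R : numDomainType) m n (u : 'rV[R]_m) (P : 'M[R]_(m, n)) j :
  (forall k, `|u 0 k| <= 1) -> `|(u *m P) 0 j| <= \sum_k `|P k j|.
Proof.
move=> u1; rewrite mxE; apply: le_trans (ler_norm_sum _ _ _) _.
by apply: ler_sum => k _; rewrite normrM ler_piMl.
Qed.

Section FanCoordinates.
Variables (R : realType) (d n : nat) (v : 'I_n -> 'rV[R]_d) (D : {set {set 'I_n}}).

Definition cone_gen_mx (S : {set 'I_n}) : 'M[R]_(n, d) :=
  \matrix_(i, k) (if i \in S then v i 0 k else 0).

Lemma mul_cone_gen_mx S (x : 'rV[R]_n) :
  x *m cone_gen_mx S = \sum_(i in S) x 0 i *: v i.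
Proof.
rewrite mulmx_sum_row [RHS]big_mkcond /=; apply: eq_bigr => i _.
have row_iW : row i (cone_gen_mx S) = if i \in S then v i else 0.
  by apply/rowP => k; rewrite !mxE; case: ifP; rewrite ?mxE.
by rewrite row_iW; case: ifP; rewrite ?scaler0.
Qed.

Lemma lin_indep_mul_cone_gen_mx_eq0 S (x : 'rV[R]_n) :
  lin_indep v S -> x *m cone_gen_mx S = 0 -> forall j, j \in S -> x 0 j = 0.
Proof.
move=> indS xW0 j jS.
have := indS (fun i => if i \in S then x 0 i else 0) _ _ j; rewrite jS; apply.
  by move=> i /negbTE ->.
apply: etrans xW0; rewrite mul_cone_gen_mx [RHS]big_mkcond /=; apply: eq_bigr => i _.
by case: ifP; rewrite ?scale0r.
Qed.

Lemma coords_on_cone_pinvmx S u (lam : 'rV[R]_n) :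
  lin_indep v S -> (forall i, i \notin S -> lam 0 i = 0) ->
  u = \sum_i lam 0 i *: v i ->
  forall j, j \in S -> lam 0 j = (u *m pinvmx (cone_gen_mx S)) 0 j.
Proof.
move=> indS lam0 uE j jS; set W := cone_gen_mx S.
have u_lamW : u = lam *m W.
  rewrite mul_cone_gen_mx uE [RHS]big_mkcond /=; apply: eq_bigr => i _.
  by case: ifPn => // /lam0 ->; rewrite scale0r.
have yW : u *m pinvmx W *m W = u by rewrite mulmxKpV // u_lamW submxMl.
apply/eqP; rewrite eq_sym -subr_eq0; apply/eqP.
have := @lin_indep_mul_cone_gen_mx_eq0 S (u *m pinvmx W - lam) indS _ j jS.
rewrite !mxE; apply; by rewrite mulmxBl yW -u_lamW subrr.
Qed.

Lemma coordsP u : is_coords v D u (coords v D u) \/ coords v D u = 0.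
Proof.
rewrite /coords; have [[lam lamP]|no_coords] := pselect (exists lam, is_coords v D u lam).
  by left; apply: xgetPex; exists lam.
by right; apply: xgetPN => lam lamP; apply: no_coords; exists lam.
Qed.

Lemma coords_ge0 u j : 0 <= coords v D u 0 j.
Proof.
have [[S _ [lam_gt0 lam0 _]]|->] := coordsP u; last by rewrite mxE.
by have [/lam_gt0/ltW|/lam0 ->] := boolP (j \in S).
Qed.

Hypothesis ind_D : forall S, S \in D -> lin_indep v S.

(* Any finite bound would do; it only makes the supremum c^Delta meaningful. *)
Definition coords_bound : R :=
  \sum_(S : {set 'I_n}) \sum_j \sum_k `|pinvmx (cone_gen_mx S) k j|.

Lemma coords_bound_ge0 : 0 <= coords_bound.
Proof. by do 3!(apply: sumr_ge0 => ? _). Qed.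

Lemma is_coords_le_bound u lam j :
  on_sphere u -> is_coords v D u lam -> lam 0 j <= coords_bound.
Proof.
move=> u1 [S SD [lam_gt0 lam0 uE]].
have [jS|/lam0 ->] := boolP (j \in S); last exact: coords_bound_ge0.
rewrite (coords_on_cone_pinvmx (ind_D SD) lam0 uE jS).
apply: le_trans (ler_norm _) _.
have u_le1 k : `|u 0 k| <= 1 by exact: on_sphere_norm_le1.
apply: le_trans (row_mulmx_norm_le _ _ u_le1) _.
rewrite /coords_bound (bigD1 S) //= (bigD1 j) //= -addrA lerDl.
by apply: addr_ge0; do ?(apply: sumr_ge0 => ? _).
Qed.

Lemma coords_le_cDelta u j : on_sphere u -> coords v D u 0 j <= cDelta v D.
Proof.
move=> u1; apply: ub_le_sup; last by exists u; split => //; exists j.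
exists coords_bound => _ [w [w1 [i ->]]].
have [wP|->] := coordsP w; first exact: is_coords_le_bound wP.
by rewrite mxE coords_bound_ge0.
Qed.

End FanCoordinates.

Theorem lemma4p7 (R : realType) (d n : nat) (v : 'I_n -> 'rV[R]_d)
  (D : {set {set 'I_n}})
  (Hfan : simplicial_fan_rays v D) (Hpoly : polytopal v D)
  (m : nat) (Hm : (1 <= m)%N) (U : 'I_m -> 'rV[R]_d)
  (HU : forall i, on_sphere (U i)) :
  lambda_max ((A_U v D U)^T *m A_U v D U) <= m%:R * n%:R * (cDelta v D) ^+ 2.
Proof.
have [ind_D _ _] := Hfan.
have A_bounds i j : 0 <= A_U v D U i j <= cDelta v D.
  by rewrite mxE coords_ge0 coords_le_cDelta.
apply: lambda_max_le => [|a eig_a]; first by rewrite mulr_ge0 ?sqr_ge0 // -natrM.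
have := eigenvalue_le_dim_mul_entry_bound (gram_entry_norm_le A_bounds) eig_a.
by rewrite mulrCA mulrA.
Qed.
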